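(* Let $n\ge1$, $\varepsilon\in D$, $s\in D^n$, with the recursive construction below, and suppose $\Delta_n\neq0$. Then (i) $\big(\mu^{(n)}\big)^{*}=\Delta'_n\,\big(\mu^{(n-1)}\big)^{*}-\Delta_n\,x^{p(n-1)}\big(\mu^{((n-1)')}\big)^{*}$; (ii) $p(n)=p(n-1)+1$ if $e_{n-1}\le0$, and $p(n)=1$ if $e_{n-1}>0$.
   Context: Let $D$ be a commutative integral domain with $1\neq 0$. The reciprocal of $0$ is $0$, and for nonzero $f\in D[x]$ its reciprocal is $f^{*}(x)=x^{\deg f}f(x^{-1})$. For $s=(s_1,\dots,s_n)\in D^n$ put $\underline{s}=s_1x^{-1}+\cdots+s_nx^{-n}\in D[x,x^{-1}]$; for a Laurent polynomial $F$, $F_k$ is the coefficient of $x^k$; $s^{(i)}=(s_1,\dots,s_i)$. For nonzero $f\in D[x]$ and $t\in D^m$, $\Delta(f,t)=(f\cdot\underline{t})_{\deg f-m}$. Recursive construction (relative to a fixed $\varepsilon\in D$): put $\mu^{(-1)}=\varepsilon$, $\mu^{(0)}=1$, $\Delta_0=1$, $0'=-1$, and for $j\ge 0$ let $e_j=j+1-2\deg\mu^{(j)}$ (so $e_0=1$). For $j=1,\dots,n$ successively define: $\Delta_j=\Delta(\mu^{(j-1)},s^{(j)})$; the index $j'=(j-1)'$ if $\Delta_j=0$ or $e_{j-1}\le 0$, and $j'=j-1$ if $\Delta_j\neq0$ and $e_{j-1}>0$; $\Delta'_j=\Delta_{(j-1)'+1}$; and $\mu^{(j)}=\mu^{(j-1)}$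 if $\Delta_j=0$, otherwise $\mu^{(j)}=\Delta'_j\,x^{\max\{e_{j-1},0\}}\mu^{(j-1)}-\Delta_j\,x^{\max\{-e_{j-1},0\}}\mu^{((j-1)')}$. Define $p(0)=1$ and $p(j)=j-j'$ for $1\le j\le n$. *)

From HB Require Import structures.
From mathcomp Require Import all_boot all_order all_algebra.
Set Implicit Arguments. Unset Strict Implicit. Unset Printing Implicit Defensive.
Import Order.TTheory GRing.Theory Num.Theory.
Local Open Scope ring_scope.

Section BMA.
Variable D : idomainType.

(* degree of a polynomial (only used for nonzero polynomials) *)
Definition pdeg (f : {poly D}) : nat := (size f).-1.

(* reciprocal: 0* = 0, f* = x^{deg f} f(1/x), i.e. coefficient i of f* is f_{deg f - i} *)
Definition recip (f : {poly D}) : {poly D} :=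
  \poly_(i < size f) f`_((size f).-1 - i).

Definition coefZ (f : {poly D}) (k : int) : D :=
  match k with Posz k' => f`_k' | Negz _ => 0 end.

(* Delta(f,t) = (f * (t_1 x^-1 + ... + t_m x^-m))_{deg f - m}
   = sum_{i=1}^m f_{deg f - m + i} t_i  (literal unfolding of the Laurent product) *)
Definition DeltaFT (f : {poly D}) (t : seq D) : D :=
  let m := size t in
  \sum_(i < m) coefZ f ((pdeg f)%:Z - m%:Z + (i.+1)%:Z) * t`_i.

(* history of the recursive construction up to step k:
   M j = mu^(j) (j >= 0), Dl j = Delta_j (j >= 0), J j = j' (j >= 0) *)
Definition muZ (eps : D) (M : nat -> {poly D}) (j : int) : {poly D} :=
  match j with Posz k => M k | Negz _ => eps%:P end.
Definition DlZ (Dl : nat -> D) (j : int) : D :=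
  match j with Posz k => Dl k | Negz _ => 0 end.
Definition eOf (j : nat) (f : {poly D}) : int := (j.+1)%:Z - 2%:Z * (pdeg f)%:Z.

Fixpoint hist (eps : D) (s : seq D) (k : nat)
  : (nat -> {poly D}) * (nat -> D) * (nat -> int) :=
  match k with
  | 0 => (fun _ => 1, fun _ => 1, fun _ => (-1)%R)
  | k'.+1 =>
    let: (M, Dl, J) := hist eps s k' in
    let j := k'.+1 in
    let dj := DeltaFT (M k') (take j s) in
    let e := eOf k' (M k') in
    let jp := if (dj == 0) || (e <= 0) then J k' else k'%:Z in
    let dpr := DlZ Dl (J k' + 1) in
    let mj := if dj == 0 then M k'
              else dpr *: ('X^(absz (Num.max e 0)) * M k')
                   - dj *: ('X^(absz (Num.max (- e) 0)) * muZ eps M (J k')) in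
    (fun i => if i == j then mj else M i,
     fun i => if i == j then dj else Dl i,
     fun i => if i == j then jp else J i)
  end.

Definition mu (eps : D) (s : seq D) (j : int) : {poly D} :=
  match j with Posz k => (hist eps s k).1.1 k | Negz _ => eps%:P end.
Definition Delta (eps : D) (s : seq D) (j : nat) : D := (hist eps s j).1.2 j.
Definition jp (eps : D) (s : seq D) (j : nat) : int := (hist eps s j).2 j.
Definition e (eps : D) (s : seq D) (j : nat) : int := eOf j (mu eps s j%:Z).
Definition Deltap (eps : D) (s : seq D) (j : nat) : D :=
  DlZ (Delta eps s) (jp eps s j.-1 + 1).
(* p(0) = 1, p(j) = j - j' (a positive integer, since j' <= j-1) *)
Definition p (eps : D) (s : seq D) (j : nat) : nat :=
  if j == 0%N then 1%N else absz (j%:Z - jp eps s j).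

End BMA.

From HB Require Import structures.
From mathcomp Require Import all_boot all_order all_algebra zify.
Import Order.TTheory GRing.Theory Num.Theory.
Set Implicit Arguments. Unset Strict Implicit. Unset Printing Implicit Defensive.
Local Open Scope ring_scope.

(* The reciprocal of a polynomial of degree N is its coefficient reversal with
   respect to N, and reversing x^a f with respect to N is reversing f with
   respect to N - a.  In the update
     mu^(k+1) = Delta' x^(max(e_k,0)) mu^(k) - Delta_(k+1) x^(max(-e_k,0)) mu^(k')
   the first term has strictly larger degree thanks to the invariant
     deg mu^(k) + deg mu^(k') = k' + 1  and  Delta_(k'+1) <> 0
   (with deg mu^(-1) = 0), which is preserved because (k+1)' is k' or k
   according to the sign of e_k.  Reversing the second term with respect to
   deg mu^(k+1) then produces the extra factor x^(k - k') = x^(p(k)), which is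
   part (i); the same case split on e_k gives part (ii). *)

Section ReversePoly.
Variable R : idomainType.
Implicit Types (f g : {poly R}) (N a t : nat).

Definition rev_poly N f := \poly_(i < N.+1) f`_(N - i).

Lemma size_pdeg f : (size f <= (pdeg f).+1)%N.
Proof. by rewrite /pdeg; case: (size f). Qed.

Lemma recip_rev_poly f : recip f = rev_poly (pdeg f) f.
Proof.
apply/polyP => i; rewrite /recip /rev_poly !coef_poly /pdeg.
case sz: (size f) => [|m] //=.
by rewrite nth_default ?sz //; case: ifP.
Qed.

Lemma rev_poly_lincomb N (c d : R) f g :
  rev_poly N (c *: f - d *: g) = c *: rev_poly N f - d *: rev_poly N g.
Proof.
apply/polyP => i; rewrite coefB !coefZ !coef_poly coefB !coefZ.
by case: ifP => _; rewrite ?mulr0 ?subr0.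
Qed.

Lemma rev_polyXnM N a f : (a <= N)%N -> (size f <= (N - a).+1)%N ->
  rev_poly N ('X^a * f) = rev_poly (N - a) f.
Proof.
move=> le_aN sz_f; apply/polyP => i; rewrite !coef_poly coefXnM.
case: (ltnP i (N - a).+1) => le_i.
  have -> : (i < N.+1)%N by lia.
  have -> : (N - i < a)%N = false by lia.
  by congr (f`_ _); lia.
by case: ifP => // lt_iN; case: ifP => //; lia.
Qed.

Lemma rev_poly_addn N t f : (size f <= N.+1)%N ->
  rev_poly (N + t) f = 'X^t * rev_poly N f.
Proof.
move=> sz_f; apply/polyP => i; rewrite !coef_poly coefXnM coef_poly.
case: (ltnP i t) => [lt_it|le_ti].
  by case: ifP => // _; rewrite nth_default //; apply: leq_trans sz_f _; lia.
have -> : (i - t < N.+1)%N = (i < (N + t).+1)%N by lia.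
by case: ifP => // _; congr (f`_ _); lia.
Qed.

Section ShiftedCombination.
Variables (c d : R) (F G : {poly R}) (a b t : nat).
Hypotheses (c_neq0 : c != 0) (F_neq0 : F != 0) (t_gt0 : (0 < t)%N)
  (deg_balance : (b + pdeg G + t = a + pdeg F)%N).

Lemma size_XnM_sub :
  size (c *: ('X^a * F) - d *: ('X^b * G)) = (a + pdeg F).+1.
Proof.
have sz_F : size F = (pdeg F).+1 by rewrite /pdeg prednK // size_poly_gt0.
have sz_lead : size (c *: ('X^a * F)) = (a + pdeg F).+1.
  by rewrite size_scale // size_monicM ?monicXn // size_polyXn sz_F addSn addnS.
rewrite size_polyDl sz_lead // size_polyN.
apply: leq_ltn_trans (size_scale_leq _ _) _.
apply: leq_ltn_trans (size_polyMleq _ _) _.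
rewrite size_polyXn; apply: leq_ltn_trans (leq_add (leqnn _) (size_pdeg G)) _; lia.
Qed.

Lemma recip_XnM_sub :
  recip (c *: ('X^a * F) - d *: ('X^b * G)) = c *: recip F - d *: ('X^t * recip G).
Proof.
have shift_G : (a + pdeg F - b = pdeg G + t)%N by lia.
rewrite recip_rev_poly /pdeg size_XnM_sub /= rev_poly_lincomb.
rewrite rev_polyXnM ?leq_addr ?addKn ?size_pdeg // rev_polyXnM; last 2 first.
- lia.
- by rewrite shift_G; apply: leq_trans (size_pdeg G) _; rewrite ltnS leq_addr.
by rewrite shift_G rev_poly_addn ?size_pdeg // -!recip_rev_poly.
Qed.

End ShiftedCombination.
End ReversePoly.

Section BerlekampMassey.
Variables (D : idomainType) (eps : D) (s : seq D).

Lemma hist_step k : hist eps s k.+1 =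
  (fun i => if i == k.+1 then mu eps s k.+1 else (hist eps s k).1.1 i,
   fun i => if i == k.+1 then Delta eps s k.+1 else (hist eps s k).1.2 i,
   fun i => if i == k.+1 then jp eps s k.+1 else (hist eps s k).2 i).
Proof.
by rewrite /mu /Delta /jp /=; case: (hist eps s k) => [[M Dl] J] /=; rewrite !eqxx.
Qed.

Lemma hist_stable {k i} : (i <= k)%N ->
  [/\ (hist eps s k).1.1 i = mu eps s i, (hist eps s k).1.2 i = Delta eps s i
    & (hist eps s k).2 i = jp eps s i].
Proof.
elim: k => [|k IHk]; first by rewrite leqn0 => /eqP ->.
rewrite leq_eqVlt hist_step /= => /orP[/eqP-> | lt_ik]; first by rewrite eqxx.
by rewrite ltn_eqF //; apply: IHk.
Qed.

Lemma DeltaS k : Delta eps s k.+1 = DeltaFT (mu eps s k) (take k.+1 s).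
Proof.
have [<- _ _] := hist_stable (leqnn k).
by rewrite /Delta /=; case: (hist eps s k) => [[M Dl] J] /=; rewrite eqxx.
Qed.

Lemma jpS k : jp eps s k.+1 =
  if (Delta eps s k.+1 == 0) || (e eps s k <= 0) then jp eps s k else k%:Z.
Proof.
have [mu_k _ <-] := hist_stable (leqnn k).
rewrite DeltaS /e -mu_k /jp /=.
by case: (hist eps s k) => [[M Dl] J] /=; rewrite eqxx.
Qed.

Lemma jp_bounds k : -1 <= jp eps s k < k%:Z.
Proof. by elim: k => [//|k IHk]; rewrite jpS; case: ifP; lia. Qed.

Lemma muS k : mu eps s k.+1 =
  if Delta eps s k.+1 == 0 then mu eps s k
  else Deltap eps s k.+1 *: ('X^(absz (Num.max (e eps s k) 0)) * mu eps s k)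
     - Delta eps s k.+1 *: ('X^(absz (Num.max (- e eps s k) 0)) * mu eps s (jp eps s k)).
Proof.
have [mu_k _ jp_k] := hist_stable (leqnn k).
have hist_muZ : muZ eps (hist eps s k).1.1 (jp eps s k) = mu eps s (jp eps s k).
  case: (jp eps s k) (jp_bounds k) => // a /andP[_ lt_ak] /=.
  by have [-> _ _] := hist_stable (ltnW lt_ak).
have hist_Deltap : DlZ (hist eps s k).1.2 (jp eps s k + 1) = Deltap eps s k.+1.
  rewrite /Deltap; case: (jp eps s k) (jp_bounds k) => [a | [|a]] bnd; last by lia.
    have lt_ak : (a < k)%N by lia.
    by rewrite -PoszD addn1 /=; have [_ -> _] := hist_stable lt_ak.
  by rewrite /=; have [_ -> _] := hist_stable (leq0n k).
rewrite -hist_Deltap -hist_muZ DeltaS /e -jp_k -mu_k {1}/mu /=.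
by case: (hist eps s k) => [[M Dl] J] /=; rewrite eqxx.
Qed.

Lemma eE k : e eps s k = (k.+1)%:Z - 2%:Z * (pdeg (mu eps s k))%:Z.
Proof. by []. Qed.

Lemma p_jp k : (p eps s k)%:Z = k%:Z - jp eps s k.
Proof. by rewrite /p; case: eqP => [-> //| _]; have := jp_bounds k; lia. Qed.

Definition bm_invariant (k : nat) :=
  [/\ mu eps s k != 0,
      (pdeg (mu eps s k) + pdeg (mu eps s (jp eps s k)))%:Z = jp eps s k + 1
    & Deltap eps s k.+1 != 0].

Lemma bm_invariant0 : bm_invariant 0.
Proof.
split; first by rewrite /mu /= oner_neq0.
  by rewrite /mu /= /pdeg size_poly1 size_polyC; case: (eps != 0).
by rewrite /Deltap /= /Delta /= oner_neq0.
Qed.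

Lemma mu_step k : bm_invariant k -> Delta eps s k.+1 != 0 ->
  [/\ mu eps s k.+1 != 0,
      pdeg (mu eps s k.+1) = maxn (k.+1 - pdeg (mu eps s k)) (pdeg (mu eps s k))
    & recip (mu eps s k.+1) = Deltap eps s k.+1 *: recip (mu eps s k)
        - Delta eps s k.+1 *: ('X^(p eps s k) * recip (mu eps s (jp eps s k)))].
Proof.
move=> [mu_neq0 deg_sum Deltap_neq0] Delta_neq0.
have p_k := p_jp k; have jp_k := jp_bounds k.
have e_k := eE k.
have p_gt0 : (0 < p eps s k)%N by lia.
have balance : (absz (Num.max (- e eps s k) 0)%R + pdeg (mu eps s (jp eps s k))
    + p eps s k = absz (Num.max (e eps s k) 0)%R + pdeg (mu eps s k))%N by lia.
rewrite muS (negbTE Delta_neq0).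
have sz := size_XnM_sub (Delta eps s k.+1) Deltap_neq0 mu_neq0 p_gt0 balance.
split; first by rewrite -size_poly_gt0 sz.
  by rewrite {1}/pdeg sz succnK; lia.
exact: recip_XnM_sub.
Qed.

Lemma bm_invariantS k : bm_invariant k -> bm_invariant k.+1.
Proof.
move=> inv_k; have [mu_neq0 deg_sum Deltap_neq0] := inv_k.
rewrite /bm_invariant /Deltap [k.+2.-1]/= jpS.
have [D0 | Delta_neq0] := eqVneq (Delta eps s k.+1) 0.
  by rewrite muS D0 eqxx; split.
have [mu_neq0' deg_mu _] := mu_step inv_k Delta_neq0.
have e_k := eE k.
rewrite deg_mu orFb; case: ifP => e_le0; split => //; [lia | lia |].
by rewrite -PoszD addn1.
Qed.

Lemma bm_invariant_all k : bm_invariant k.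
Proof. by elim: k => [|k]; [exact: bm_invariant0 | exact: bm_invariantS]. Qed.

End BerlekampMassey.

Theorem mainTheorem8 (D : idomainType) (n : nat) (eps : D) (s : n.-tuple D) :
  (0 < n)%N -> Delta eps s n != 0 ->
  recip (mu eps s n%:Z)
    = Deltap eps s n *: recip (mu eps s (n.-1)%:Z)
      - Delta eps s n *: ('X^(p eps s n.-1) * recip (mu eps s (jp eps s n.-1)))
  /\ p eps s n = (if e eps s n.-1 <= 0 then (p eps s n.-1).+1 else 1%N).
Proof.
case: n s => [//|k] s _ Delta_neq0; rewrite [k.+1.-1]/=.
have [_ _ recip_mu] := mu_step (bm_invariant_all eps s k) Delta_neq0.
split=> //.
have := p_jp eps s k.+1; have := p_jp eps s k.
by rewrite jpS (negbTE Delta_neq0) /=; case: ifP; lia.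
Qed.
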